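(* Let \[P=\{x\in[0,2]^2 : 2x_1+x_2\le 5,\ -2x_1+3x_2\le 3\}\subseteq\mathbb{R}^2,\] with both variables integer, and let \[P_L=\{(x,z)\in\mathbb{R}^2\times[0,1]^4 : x\in P,\ x_i=z_{i1}+2z_{i2}\text{ for } i=1,2\},\] where $z=(z_{11},z_{12},z_{21},z_{22})$ and all six variables of $P_L$ are integer variables. Then \[\operatorname{proj}_x\big(\mathrm{SC}(P_L)\big)\subsetneq \mathrm{SC}(P).\]
   Context: Split sets and split closure. For $(\pi,\pi_0)\in\mathbb{Z}^n\times\mathbb{Z}$, the split set is $S(\pi,\pi_0)=\{x\in\mathbb{R}^n:\pi_0<\pi^Tx<\pi_0+1\}$. Let $J\subseteq\{1,\dots,n\}$ be the index set of integer variables, and let $\mathcal{S}_n(J)$ be the family of split sets $S(\pi,\pi_0)$ with $\pi\in\mathbb{Z}^n$, $\pi_j=0$ for $j\notin J$, and $\pi_0\in\mathbb{Z}$. For $X\subseteq\mathbb{R}^n$, the split closure is $\mathrm{SC}(X,J)=\bigcap_{S\in\mathcal{S}_n(J)}\mathrm{conv}(X\setminus S)$. Here $\mathrm{SC}(P)$ means $\mathrm{SC}(P,\{1,2\})$, and $\mathrm{SC}(P_L)$ means the split closure of $P_L$ with all six coordinates integer. $\operatorname{proj}_x$ denotes orthogonal projection onto the $x$-coordinates. *)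

From HB Require Import structures.
From mathcomp Require Import all_boot all_order all_algebra.
From mathcomp Require Import classical_sets reals.
Set Implicit Arguments. Unset Strict Implicit. Unset Printing Implicit Defensive.
Import Order.TTheory GRing.Theory Num.Theory.
Local Open Scope ring_scope.
Local Open Scope classical_set_scope.

(* Points of R^n are functions 'I_n -> R; coordinate j is x j (0-based). *)

Definition idot (R : realType) (n : nat) (pi : 'I_n -> int) (x : 'I_n -> R) : R :=
  \sum_(i < n) (pi i)%:~R * x i.

Definition split_set (R : realType) (n : nat) (pi : 'I_n -> int) (pi0 : int)
  : set ('I_n -> R) :=
  [set x | pi0%:~R < idot pi x < (pi0 + 1)%:~R].

Definition conv (R : realType) (n : nat) (X : set ('I_n -> R)) : set ('I_n -> R) :=
  [set y | exists (k : nat) (lam : 'I_k -> R) (p : 'I_k -> 'I_n -> R),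
     [/\ (forall i, 0 <= lam i), \sum_(i < k) lam i = 1, (forall i, X (p i))
       & (forall j, y j = \sum_(i < k) lam i * p i j)]].

Definition split_closure (R : realType) (n : nat) (X : set ('I_n -> R))
  (J : {set 'I_n}) : set ('I_n -> R) :=
  [set y | forall (pi : 'I_n -> int) (pi0 : int),
     (forall j, j \notin J -> pi j = 0) -> conv (X `\` split_set pi pi0) y].

(* P = { x in [0,2]^2 : 2x1 + x2 <= 5, -2x1 + 3x2 <= 3 }, x1 = x 0, x2 = x 1 *)
Definition x1_2 : 'I_2 := @Ordinal 2 0 isT.
Definition x2_2 : 'I_2 := @Ordinal 2 1 isT.

Definition P (R : realType) : set ('I_2 -> R) :=
  [set x | (forall i, 0 <= x i <= 2)
     /\ 2 * x x1_2 + x x2_2 <= 5 /\ - 2 * x x1_2 + 3 * x x2_2 <= 3].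

(* coordinates of R^6 = (x1, x2, z11, z12, z21, z22) at indices 0..5 *)
Definition c6 (k : nat) (h : (k < 6)%N) : 'I_6 := Ordinal h.

Definition proj_x (R : realType) (y : 'I_6 -> R) : 'I_2 -> R :=
  fun i => y (widen_ord (isT : (2 <= 6)%N) i).

Definition P_L (R : realType) : set ('I_6 -> R) :=
  [set y | P (proj_x y)
     /\ (forall k (h : (2 <= k)%N) (h' : (k < 6)%N), 0 <= y (c6 h') <= 1)
     /\ y (c6 (isT : (0 < 6)%N)) = y (c6 (isT : (2 < 6)%N)) + 2 * y (c6 (isT : (3 < 6)%N))
     /\ y (c6 (isT : (1 < 6)%N)) = y (c6 (isT : (4 < 6)%N)) + 2 * y (c6 (isT : (5 < 6)%N))].

From HB Require Import structures.
From mathcomp Require Import all_boot all_order all_algebra.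
From mathcomp Require Import classical_sets reals.
From mathcomp Require Import ring lra zify.
Set Implicit Arguments. Unset Strict Implicit. Unset Printing Implicit Defensive.
Import Order.TTheory GRing.Theory Num.Theory.
Local Open Scope ring_scope.
Local Open Scope classical_set_scope.

(* The inclusion holds because a split of R^2 lifts to a split of R^6 with zero
   coefficients on z, and projecting a convex combination of points of P_L
   outside the lifted split gives one of points of P outside the original split.

   The point x* = (5/4, 3/2) separates the two sets.  It equals
   1/2 v + 1/4 (0,1) + 1/4 (2,1), where v = (3/2, 2) is the fractional vertex
   of P.  A split (pi, pi0) = ((a, b), pi0) containing v has pi.v = pi0 + 1/2,
   so 3a + 4b is odd; then a - 2b is odd and 3a + 2b = 3(a - 2b) + 8b, so one of
   the variations a - 2b, -(3a + 2b) of 2 pi.x along the edges from v to (2,1)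
   and (0,1) has absolute value at least 3.  That edge leaves the split within
   a third of its length, which still keeps x* in the hull.
   In P_L, the splits on z11 + z12 + z21 + z22, on z22 - z12 and on z12 give
   the cuts z11 + z12 + z21 + z22 <= 2, z22 <= z12 and
   -2 z11 + 3 z21 + 6 z22 <= 3; with x2 = z21 + 2 z22 = 3/2 they force
   z11 >= 3/4 and hence z11 + z12 + z21 + z22 >= 9/4. *)

Section ConvexHull.
Variables (R : realType) (n : nat).
Implicit Types (X : set ('I_n -> R)) (a p u v y : 'I_n -> R).

Lemma conv_sum_le X a c y :
  (forall p, X p -> \sum_j a j * p j <= c) -> conv X y -> \sum_j a j * y j <= c.
Proof.
move=> Xc [k [lam [p [lam_ge0 lam_sum1 Xp ey]]]].
have -> : \sum_j a j * y j = \sum_i lam i * \sum_j a j * p i j.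
  under eq_bigr do rewrite ey mulr_sumr.
  rewrite exchange_big /=; apply: eq_bigr => i _; rewrite mulr_sumr.
  by apply: eq_bigr => j _; rewrite mulrCA.
apply: le_trans (_ : \sum_i lam i * c <= c).
  by apply: ler_sum => i _; apply: ler_wpM2l; [exact: lam_ge0 | exact: Xc].
by rewrite -mulr_suml lam_sum1 mul1r.
Qed.

Lemma conv3 X p1 p2 p3 l1 l2 l3 y :
  X p1 -> X p2 -> X p3 -> 0 <= l1 -> 0 <= l2 -> 0 <= l3 -> l1 + l2 + l3 = 1 ->
  (forall j, y j = l1 * p1 j + l2 * p2 j + l3 * p3 j) -> conv X y.
Proof.
move=> X1 X2 X3 l1_ge0 l2_ge0 l3_ge0 l_sum1 ey.
exists 3%N, (fun i : 'I_3 => [:: l1; l2; l3]`_i), (fun i : 'I_3 => nth p1 [:: p1; p2; p3] i).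
split.
- by case=> -[|[|[|//]]].
- by rewrite !big_ord_recr big_ord0 /= add0r.
- by case=> -[|[|[|//]]].
- by move=> j; rewrite !big_ord_recr big_ord0 /= add0r.
Qed.

(* Replacing [v] by a point of the edge [v, u] shifts weight from [u] to [v];
   up to parameter 1/3 the weight left on [u] stays nonnegative. *)
Lemma conv_edge_point X v u (u' : 'I_n -> R) s y : 0 <= s <= 3^-1 ->
  X (fun j => (1 - s) * v j + s * u j) -> X u -> X u' ->
  (forall j, y j = v j / 2 + u j / 4 + u' j / 4) -> conv X y.
Proof.
move=> /andP[s_ge0 s_le] Xq Xu Xu' ey.
have s1 : 1 - s != 0 by rewrite subr_eq0 gt_eqF //; lra.
pose l := (2 * (1 - s))^-1.
have ls : l * (1 - s) = 2^-1 by rewrite /l; field; rewrite s1 /=; lra.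
have l_ge0 : 0 <= l by rewrite /l invr_ge0; lra.
have l_le : l <= 3 / 4.
  have : 0 <= l * (1 - s - 2 / 3) by apply: mulr_ge0; lra.
  lra.
apply: (conv3 Xq Xu Xu' l_ge0 (l2 := 4^-1 - s * l) (l3 := 4^-1)); try lra.
by move=> j; rewrite ey mulrDr (mulrA l (1 - s)) ls; ring.
Qed.

End ConvexHull.

Section Splits.
Variables (R : realType) (n : nat).
Implicit Types (X : set ('I_n -> R)) (a u v x y : 'I_n -> R) (pi : 'I_n -> int).

Lemma idot_lincomb pi (s t : R) x y :
  idot pi (fun j => s * x j + t * y j) = s * idot pi x + t * idot pi y.
Proof. by rewrite /idot !mulr_sumr -big_split; apply: eq_bigr => j _ /=; ring. Qed.

Lemma notin_split_set pi (pi0 : int) x :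
  ~ split_set pi pi0 x <-> idot pi x <= pi0%:~R \/ pi0%:~R + 1 <= idot pi x.
Proof.
rewrite /split_set /= intrD; split.
  by move/negP; rewrite negb_and -!leNgt => /orP.
by case=> le /andP[lt1 lt2]; lra.
Qed.

Lemma int_notin_split_set pi (pi0 : int) x (k : int) :
  idot pi x = k%:~R -> ~ split_set pi pi0 x.
Proof. by rewrite /split_set /= => ->; rewrite !ltr_int => /andP[]; lia. Qed.

Lemma split_edge_exit pi (pi0 : int) v u (k : int) :
  idot pi v = pi0%:~R + 2^-1 -> 2 * (idot pi u - idot pi v) = k%:~R -> k != 0 ->
  ~ split_set pi pi0 (fun j => (1 - `|k%:~R|^-1) * v j + `|k%:~R|^-1 * u j).
Proof.
set r : R := k%:~R => piv piu k0; apply/notin_split_set.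
have r0 : r != 0 by rewrite intr_eq0.
have piuv : idot pi u = idot pi v + r / 2 by rewrite -piu; field.
rewrite idot_lincomb piuv piv.
rewrite (_ : _ + _ = pi0%:~R + 2^-1 + `|r|^-1 * r / 2); last by ring.
have [r_gt0|r_lt0] := ltP 0 r.
  by rewrite gtr0_norm // mulVf //; lra.
rewrite ltr0_norm; last by rewrite lt_neqAle r0 r_lt0.
by rewrite invrN mulNr mulVf //; lra.
Qed.

Lemma split_closure_le X J y pi (pi0 : int) a c :
  split_closure X J y -> (forall j, j \notin J -> pi j = 0) ->
  (forall p, X p -> ~ split_set pi pi0 p -> \sum_j a j * p j <= c) ->
  \sum_j a j * y j <= c.
Proof. by move=> Xy piJ Xc; apply: conv_sum_le (Xy pi pi0 piJ) => p []; apply: Xc. Qed.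

Lemma split_closure_valid X J y a c :
  split_closure X J y -> (forall p, X p -> \sum_j a j * p j <= c) ->
  \sum_j a j * y j <= c.
Proof.
by move=> Xy Xc; apply: (split_closure_le (pi := fun=> 0) (pi0 := 0) Xy) => // p Xp _; apply: Xc.
Qed.

End Splits.

Section Projection.
Variables (R : realType) (n m : nat) (le_nm : (n <= m)%N).

Definition extend_int (pi : 'I_n -> int) (j : 'I_m) : int := oapp pi 0 (insub (val j)).

Lemma idot_extend_int pi (y : 'I_m -> R) :
  idot (extend_int pi) y = idot pi (fun i => y (widen_ord le_nm i)).
Proof.
rewrite /idot (bigID (fun j : 'I_m => (j < n)%N)) /= [X in _ + X]big1 ?addr0.
  by rewrite big_ord_narrow; apply: eq_bigr => i _; rewrite /extend_int /= valK.
by move=> j /negPf jn; rewrite /extend_int insubF // mul0r.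
Qed.

Lemma split_closure_proj (X : set ('I_m -> R)) (Y : set ('I_n -> R)) :
  (forall p, X p -> Y (fun i => p (widen_ord le_nm i))) ->
  (fun y i => y (widen_ord le_nm i)) @` split_closure X [set: 'I_m]
    `<=` split_closure Y [set: 'I_n].
Proof.
move=> XY _ [y Xy <-] pi pi0 _.
have [k [lam [p [lam_ge0 lam_sum1 Xp ey]]]] :
    conv (X `\` split_set (extend_int pi) pi0) y.
  by apply: Xy => j; rewrite inE.
exists k, lam, (fun i j => p i (widen_ord le_nm j)); split => // i.
case: (Xp i) => /XY Yp Sp; split => //.
by rewrite /split_set /= -idot_extend_int.
Qed.

End Projection.

Section SplitClosureP.
Variable R : realType.
Implicit Types (x : 'I_2 -> R) (pi : 'I_2 -> int).

Definition pt2 (u w : R) : 'I_2 -> R := fun i => [:: u; w]`_i.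

Lemma sum2 (F : 'I_2 -> R) : \sum_i F i = F x1_2 + F x2_2.
Proof.
rewrite !big_ord_recl big_ord0 addr0.
by congr (F _ + F _); apply: val_inj.
Qed.

Lemma idot_pt2 pi u w : idot pi (pt2 u w) = (pi x1_2)%:~R * u + (pi x2_2)%:~R * w.
Proof. by rewrite /idot sum2. Qed.

Lemma P_intro x :
  0 <= x x1_2 -> x x1_2 <= 2 -> 0 <= x x2_2 -> x x2_2 <= 2 ->
  2 * x x1_2 + x x2_2 <= 5 -> - 2 * x x1_2 + 3 * x x2_2 <= 3 -> @P R x.
Proof.
move=> x1_ge0 x1_le2 x2_ge0 x2_le2 P1 P2; split=> //.
case=> -[|[|//]] i_lt.
  by rewrite (_ : Ordinal i_lt = x1_2) ?x1_ge0 //; apply: val_inj.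
by rewrite (_ : Ordinal i_lt = x2_2) ?x2_ge0 //; apply: val_inj.
Qed.

Lemma P_integral_points pi (pi0 : int) :
  (@P R `\` split_set pi pi0) (pt2 0 1) /\ (@P R `\` split_set pi pi0) (pt2 2 1).
Proof.
split; split; try by apply: P_intro; rewrite /pt2 /=; lra.
  by apply: (int_notin_split_set (k := pi x2_2)); rewrite idot_pt2; lra.
apply: (int_notin_split_set (k := 2 * pi x1_2 + pi x2_2)).
by rewrite idot_pt2 intrD intrM; lra.
Qed.

Lemma split_P_edge_exit pi (pi0 : int) : exists2 s, 0 <= s <= 3^-1 &
  ~ split_set pi pi0 (fun j => (1 - s) * pt2 (3/2) 2 j + s * pt2 0 1 j) \/
  ~ split_set pi pi0 (fun j => (1 - s) * pt2 (3/2) 2 j + s * pt2 2 1 j).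
Proof.
set v := pt2 (3/2) 2; set a := pi x1_2; set b := pi x2_2.
have [Sv|Sv] := boolP (pi0%:~R < idot pi v < (pi0 + 1)%:~R); last first.
  exists 0; first by apply/andP; split; lra.
  by left; rewrite /split_set /= idot_lincomb subr0 mul1r mul0r addr0; apply/negP.
have odd : 3 * a + 4 * b = 2 * pi0 + 1.
  move: Sv; rewrite idot_pt2 intrD => /andP[lt1 lt2].
  have lt : ((2 * pi0)%:~R : R) < (3 * a + 4 * b)%:~R < ((2 * pi0 + 2)%:~R : R).
    by rewrite !intrD !intrM; apply/andP; split; lra.
  by move: lt; rewrite !ltr_int => /andP[]; lia.
have piv : idot pi v = pi0%:~R + 2^-1.
  have := congr1 (fun z : int => z%:~R : R) odd.
  by rewrite idot_pt2 /= !intrD !intrM; lra.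
have exit u (k : int) : 2 * (idot pi u - idot pi v) = k%:~R -> 3 <= k \/ k <= -3 ->
    exists2 s, 0 <= s <= 3^-1 & ~ split_set pi pi0 (fun j => (1 - s) * v j + s * u j).
  move=> piu k3; have k0 : k != 0 by lia.
  exists `|k%:~R|^-1; last exact: split_edge_exit piv piu k0.
  have k3R : 3%:~R <= `|k%:~R : R| by rewrite -intr_norm ler_int; lia.
  rewrite invr_ge0 normr_ge0 /= lef_pV2 ?posrE //; lra.
have [k2|k1] : (3 <= a - 2 * b \/ a - 2 * b <= -3) \/
    (3 <= - (3 * a + 2 * b) \/ - (3 * a + 2 * b) <= -3) by lia.
- have piu : 2 * (idot pi (pt2 2 1) - idot pi v) = (a - 2 * b)%:~R.
    by rewrite !idot_pt2 intrB intrM; lra.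
  by have [s s_bd Su] := exit _ _ piu k2; exists s => //; right.
- have piu : 2 * (idot pi (pt2 0 1) - idot pi v) = (- (3 * a + 2 * b))%:~R.
    by rewrite !idot_pt2 intrN intrD !intrM; lra.
  by have [s s_bd Su] := exit _ _ piu k1; exists s => //; left.
Qed.

Lemma split_closure_P_witness : split_closure (@P R) [set: 'I_2] (pt2 (5/4) (3/2)).
Proof.
move=> pi pi0 _; have [Pu1 Pu2] := P_integral_points pi pi0.
have [s s_bd Sq] := split_P_edge_exit pi pi0.
have /andP[s_ge0 s_le] := s_bd.
case: Sq => Sq.
- apply: (conv_edge_point (v := pt2 (3/2) 2) s_bd _ Pu1 Pu2).
    by split=> //; apply: P_intro; rewrite /pt2 /=; lra.
  by case=> -[|[|//]] ?; rewrite /pt2 /=; lra.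
- apply: (conv_edge_point (v := pt2 (3/2) 2) s_bd _ Pu2 Pu1).
    by split=> //; apply: P_intro; rewrite /pt2 /=; lra.
  by case=> -[|[|//]] ?; rewrite /pt2 /=; lra.
Qed.

End SplitClosureP.

Section SplitClosurePL.
Variable R : realType.
Implicit Types (p y : 'I_6 -> R).

Local Notation i_x1 := (c6 (isT : (0 < 6)%N)).
Local Notation i_x2 := (c6 (isT : (1 < 6)%N)).
Local Notation i_z11 := (c6 (isT : (2 < 6)%N)).
Local Notation i_z12 := (c6 (isT : (3 < 6)%N)).
Local Notation i_z21 := (c6 (isT : (4 < 6)%N)).
Local Notation i_z22 := (c6 (isT : (5 < 6)%N)).

Lemma sum6 (F : 'I_6 -> R) :
  \sum_j F j = F i_x1 + F i_x2 + F i_z11 + F i_z12 + F i_z21 + F i_z22.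
Proof.
rewrite !big_ord_recl big_ord0 addr0 !addrA.
by congr (F _ + F _ + F _ + F _ + F _ + F _); apply: val_inj.
Qed.

Lemma P_L_ineqs p : P_L p ->
  (0 <= p i_x1 /\ p i_x1 <= 2 /\ 0 <= p i_x2 /\ p i_x2 <= 2) /\
  (2 * p i_x1 + p i_x2 <= 5 /\ - 2 * p i_x1 + 3 * p i_x2 <= 3) /\
  (p i_x1 = p i_z11 + 2 * p i_z12 /\ p i_x2 = p i_z21 + 2 * p i_z22) /\
  (0 <= p i_z11 /\ p i_z11 <= 1 /\ 0 <= p i_z12 /\ p i_z12 <= 1) /\
  (0 <= p i_z21 /\ p i_z21 <= 1 /\ 0 <= p i_z22 /\ p i_z22 <= 1).
Proof.
case=> -[x_bd [P1 P2]] [z_bd [e1 e2]].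
move: (x_bd x1_2) (x_bd x2_2) P1 P2.
rewrite /proj_x (_ : widen_ord _ x1_2 = i_x1); last exact: val_inj.
rewrite (_ : widen_ord _ x2_2 = i_x2); last exact: val_inj.
move=> /andP[? ?] /andP[? ?] ? ?.
move: (z_bd 2%N isT isT) (z_bd 3%N isT isT) (z_bd 4%N isT isT) (z_bd 5%N isT isT).
by move=> /andP[? ?] /andP[? ?] /andP[? ?] /andP[? ?]; do !split.
Qed.

Lemma split_closure_P_L_cuts y : split_closure (@P_L R) [set: 'I_6] y ->
  [/\ y i_z11 + y i_z12 + y i_z21 + y i_z22 <= 2, y i_z22 <= y i_z12,
      - 2 * y i_z11 + 3 * y i_z21 + 6 * y i_z22 <= 3
    & y i_x2 = y i_z21 + 2 * y i_z22].
Proof.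
move=> SCy.
have cut (pi : 'I_6 -> int) (pi0 : int) (a : seq R) (c : R) :
    (forall p, P_L p -> idot pi p <= pi0%:~R \/ pi0%:~R + 1 <= idot pi p ->
       \sum_(j < 6) a`_j * p j <= c) -> \sum_(j < 6) a`_j * y j <= c.
  move=> ac; apply: (split_closure_le (pi := pi) (pi0 := pi0) SCy) => [j|p Lp /notin_split_set].
    by rewrite inE.
  exact: ac.
have valid (a : seq R) (c : R) :
    (forall p, P_L p -> \sum_(j < 6) a`_j * p j <= c) -> \sum_(j < 6) a`_j * y j <= c.
  exact: split_closure_valid SCy.
have c1 : \sum_(j < 6) [:: 0; 0; 1; 1; 1; 1]`_j * y j <= 2.
  apply: (cut (fun j => [:: 0; 0; 1; 1; 1; 1]`_j) 2) => p /P_L_ineqs.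
  by rewrite /idot !sum6 /=; lra.
have c2 : \sum_(j < 6) [:: 0; 0; 0; -1; 0; 1]`_j * y j <= 0.
  apply: (cut (fun j => [:: 0; 0; 0; -1; 0; 1]`_j) 0) => p /P_L_ineqs.
  by rewrite /idot !sum6 /=; lra.
have c3 : \sum_(j < 6) [:: 0; 0; -2; 0; 3; 6]`_j * y j <= 3.
  apply: (cut (fun j => [:: 0; 0; 0; 1; 0; 0]`_j) 0) => p /P_L_ineqs.
  by rewrite /idot !sum6 /=; lra.
have e1 : \sum_(j < 6) [:: 0; 1; 0; 0; -1; -2]`_j * y j <= 0.
  by apply: valid => p /P_L_ineqs; rewrite !sum6 /=; lra.
have e2 : \sum_(j < 6) [:: 0; -1; 0; 0; 1; 2]`_j * y j <= 0.
  by apply: valid => p /P_L_ineqs; rewrite !sum6 /=; lra.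
by move: c1 c2 c3 e1 e2; rewrite !sum6 /= => *; split; lra.
Qed.

Lemma proj_split_closure_P_L_witness :
  ~ (@proj_x R @` split_closure (@P_L R) [set: 'I_6]) (pt2 (5/4) (3/2)).
Proof.
case=> y /split_closure_P_L_cuts[c1 c2 c3 e] /(congr1 (fun x => x x2_2)).
rewrite /proj_x /pt2 /= (_ : widen_ord _ x2_2 = i_x2); last exact: val_inj.
lra.
Qed.

End SplitClosurePL.

Theorem theorem1 (R : realType) :
  let SCPL := split_closure (@P_L R) [set: 'I_6] in
  let SCP := split_closure (@P R) [set: 'I_2] in
  (@proj_x R) @` SCPL `<=` SCP /\ (@proj_x R) @` SCPL <> SCP.
Proof.
move=> SCPL SCP; split.
  by apply: (@split_closure_proj R 2 6 isT) => p [].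
move=> proj_SCPL; apply: (@proj_split_closure_P_L_witness R).
by rewrite -/SCPL proj_SCPL; apply: split_closure_P_witness.
Qed.
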